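(* Let $\{e_1,e_2,e_3\}$ be the standard basis of $\mathbb{R}^3$, let $\eta\in(0,\pi)$, $l>0$, and set $x_1=0$, $x_2=e_1$, $x_4=l(\cos\eta\,e_1+\sin\eta\,e_2)$, $x_3=x_2+x_4-x_1$. For $\lambda_1,\lambda_2\in(0,1)$ let $x_0=x_1+\lambda_1(x_2-x_1)+\lambda_2(x_4-x_1)$. Then the (Kawasaki) condition $\angle x_1x_0x_4+\angle x_2x_0x_3=\pi$ holds if and only if $$(\lambda_2-1)\lambda_2\, l^2-(\lambda_1-1)\lambda_1=0 .$$
   Context: $\angle abc\in[0,\pi]$ denotes the (unsigned) angle at the vertex $b$ between the segments $ba$ and $bc$, i.e. $\arccos\big(\frac{(a-b)\cdot(c-b)}{|a-b||c-b|}\big)$. The point $x_0$ lies in the interior of the parallelogram with corners $x_1,x_2,x_3,x_4$. *)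

From Stdlib Require Import Reals.
Open Scope R_scope.

Record R3 := mkR3 { px : R; py : R; pz : R }.

Definition vadd (a b : R3) : R3 := mkR3 (px a + px b) (py a + py b) (pz a + pz b).
Definition vsub (a b : R3) : R3 := mkR3 (px a - px b) (py a - py b) (pz a - pz b).
Definition vscale (k : R) (a : R3) : R3 := mkR3 (k * px a) (k * py a) (k * pz a).
Definition dot (a b : R3) : R := px a * px b + py a * py b + pz a * pz b.
Definition vnorm (a : R3) : R := sqrt (dot a a).

Definition e1 : R3 := mkR3 1 0 0.
Definition e2 : R3 := mkR3 0 1 0.
Definition e3 : R3 := mkR3 0 0 1.
Definition origin : R3 := mkR3 0 0 0.

Definition angle (a b c : R3) : R :=
  acos (dot (vsub a b) (vsub c b) / (vnorm (vsub a b) * vnorm (vsub c b))).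

(* The angle at [b] between non-collinear [u = a - b] and [v = c - b] is
   [PI/2 - atan (cot)], where [cot = u.v / |u x v|] (Lagrange's identity
   [|u|^2 |v|^2 = (u.v)^2 + |u x v|^2]).  Since [atan] is odd and injective, two
   such angles sum to [PI] exactly when their cotangents cancel.  For the two
   angles of the theorem [|u x v|] is [lam1 l sin eta], resp.
   [(1 - lam1) l sin eta], and clearing these denominators in the sum of
   cotangents leaves the stated quadratic. *)

From Stdlib Require Import Reals Lra.
Open Scope R_scope.

Lemma atan_inj (x y : R) : atan x = atan y -> x = y.
Proof. intro H. now rewrite <- (tan_atan x), H, tan_atan. Qed.

Lemma acos_sin_atan (t : R) : acos (sin (atan t)) = PI / 2 - atan t.
Proof.
  pose proof (atan_bound t).
  rewrite acos_asin, asin_sin; [reflexivity | lra | apply SIN_bound].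
Qed.

Lemma div_sqrt_sum_sq (d w : R) :
  0 < w -> d / sqrt (d ^ 2 + w ^ 2) = sin (atan (d / w)).
Proof.
  intro hw.
  assert (hpos : 0 < sqrt (1 + (d / w)²)).
  { apply sqrt_lt_R0. pose proof (Rle_0_sqr (d / w)). lra. }
  replace (d ^ 2 + w ^ 2) with (w² * (1 + (d / w)²)) by (unfold Rsqr; field; lra).
  rewrite sin_atan, sqrt_mult_alt, sqrt_Rsqr by (lra || apply Rle_0_sqr).
  field. lra.
Qed.

Definition cross (u v : R3) : R3 :=
  mkR3 (py u * pz v - pz u * py v)
       (pz u * px v - px u * pz v)
       (px u * py v - py u * px v).

Lemma dot_self_ge0 (u : R3) : 0 <= dot u u.
Proof.
  destruct u as [x y z]; unfold dot; simpl.
  pose proof (pow2_ge_0 x); pose proof (pow2_ge_0 y); pose proof (pow2_ge_0 z).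
  simpl in *; lra.
Qed.

Lemma lagrange_identity (u v : R3) :
  dot u u * dot v v = dot u v ^ 2 + dot (cross u v) (cross u v).
Proof. destruct u, v; unfold dot, cross; simpl; ring. Qed.

Lemma vnorm_mul (u v : R3) :
  vnorm u * vnorm v = sqrt (dot u v ^ 2 + vnorm (cross u v) ^ 2).
Proof.
  unfold vnorm.
  rewrite <- sqrt_mult_alt, pow2_sqrt, lagrange_identity by apply dot_self_ge0.
  reflexivity.
Qed.

Lemma vnorm_scale_e3 (k : R) : vnorm (vscale k e3) = Rabs k.
Proof.
  unfold vnorm, dot, vscale, e3; simpl.
  replace (k * 0 * (k * 0) + k * 0 * (k * 0) + k * 1 * (k * 1)) with k² by (unfold Rsqr; ring).
  apply sqrt_Rsqr_abs.
Qed.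

Definition cot_angle (a b c : R3) : R :=
  dot (vsub a b) (vsub c b) / vnorm (cross (vsub a b) (vsub c b)).

Lemma angle_eq_atan_cot (a b c : R3) :
  0 < vnorm (cross (vsub a b) (vsub c b)) ->
  angle a b c = PI / 2 - atan (cot_angle a b c).
Proof.
  intro hcross.
  unfold angle, cot_angle.
  now rewrite vnorm_mul, div_sqrt_sum_sq, acos_sin_atan.
Qed.

Lemma angle_add_eq_PI (a b c a' b' c' : R3) :
  0 < vnorm (cross (vsub a b) (vsub c b)) ->
  0 < vnorm (cross (vsub a' b') (vsub c' b')) ->
  (angle a b c + angle a' b' c' = PI <-> cot_angle a b c + cot_angle a' b' c' = 0).
Proof.
  intros h h'.
  rewrite (angle_eq_atan_cot a b c h), (angle_eq_atan_cot a' b' c' h').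
  split; intro H.
  - assert (Hopp : atan (cot_angle a b c) = atan (- cot_angle a' b' c'))
      by (rewrite atan_opp; lra).
    apply atan_inj in Hopp. lra.
  - replace (cot_angle a b c) with (- cot_angle a' b' c') by lra.
    rewrite atan_opp. lra.
Qed.

Lemma div_eq0 (p d : R) : d <> 0 -> (p / d = 0 <-> p = 0).
Proof.
  intro hd. unfold Rdiv. split; intro H.
  - destruct (Rmult_integral _ _ H) as [Hp | Hinv]; [exact Hp |].
    exfalso. exact (Rinv_neq_0_compat d hd Hinv).
  - rewrite H. ring.
Qed.

Theorem mainTheorem1 (eta l lam1 lam2 : R)
  (heta : 0 < eta < PI) (hl : 0 < l)
  (hlam1 : 0 < lam1 < 1) (hlam2 : 0 < lam2 < 1) :
  let x1 := origin in
  let x2 := e1 in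
  let x4 := vscale l (vadd (vscale (cos eta) e1) (vscale (sin eta) e2)) in
  let x3 := vsub (vadd x2 x4) x1 in
  let x0 := vadd x1 (vadd (vscale lam1 (vsub x2 x1)) (vscale lam2 (vsub x4 x1))) in
  (angle x1 x0 x4 + angle x2 x0 x3 = PI <->
   (lam2 - 1) * lam2 * l ^ 2 - (lam1 - 1) * lam1 = 0).
Proof.
  intros x1 x2 x4 x3 x0.
  assert (hsin : 0 < sin eta) by (apply sin_gt_0; lra).
  set (L := l * sin eta).
  assert (hL : 0 < L) by (apply Rmult_lt_0_compat; lra).
  assert (cross1 : cross (vsub x1 x0) (vsub x4 x0) = vscale (- (lam1 * L)) e3)
    by (unfold cross, x0, x1, x2, x4, L, origin, e1, e2, e3, vsub, vadd, vscale;
        simpl; f_equal; ring).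
  assert (cross2 : cross (vsub x2 x0) (vsub x3 x0) = vscale ((1 - lam1) * L) e3)
    by (unfold cross, x0, x1, x2, x3, x4, L, origin, e1, e2, e3, vsub, vadd, vscale;
        simpl; f_equal; ring).
  assert (hK1 : 0 < lam1 * L) by (apply Rmult_lt_0_compat; lra).
  assert (hK2 : 0 < (1 - lam1) * L) by (apply Rmult_lt_0_compat; lra).
  rewrite angle_add_eq_PI
    by (rewrite ?cross1, ?cross2, vnorm_scale_e3, ?Rabs_Ropp, Rabs_pos_eq; lra).
  assert (cot_sum : cot_angle x1 x0 x4 + cot_angle x2 x0 x3 =
    ((lam2 - 1) * lam2 * l ^ 2 * ((sin eta)² + (cos eta)²) - (lam1 - 1) * lam1)
      / (lam1 * (1 - lam1) * L)).
  { unfold cot_angle. rewrite cross1, cross2, !vnorm_scale_e3, Rabs_Ropp, !Rabs_pos_eq by lra.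
    unfold dot, x0, x1, x2, x3, x4, L, origin, e1, e2, vsub, vadd, vscale, Rsqr; simpl.
    field. repeat split; lra. }
  rewrite cot_sum, sin2_cos2, Rmult_1_r.
  apply div_eq0.
  apply Rgt_not_eq, Rmult_lt_0_compat; [apply Rmult_lt_0_compat |]; lra.
Qed.
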